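(* Let $\mathsf{T}$ be a rooted plane tree, let $k\geq 0$ be an integer, and suppose $\delta'=\mathsf{Pop}^k(\delta)$ for some $\delta\in\mathcal{O}(\mathsf{T})$. Then for each $v\in\mathsf{T}$, each section of $\delta'(v)$ has at least $k-1$ (distinct) beads in $\delta'$.
   Context: A rooted plane tree $\mathsf{T}$ is a finite tree with a distinguished root, regarded as a poset $\leq_\mathsf{T}$ in which $v'\leq_\mathsf{T} v$ iff $v$ lies on the path from $v'$ to the root; children of $v$ are nodes covered by $v$. For a set $S$ of nodes and a node $u$, $\Delta_S(u)=\{x\in S:x\leq_\mathsf{T} u\}$. An ornament is a nonempty set of nodes inducing a connected subgraph; an ornamentation is a map $\sigma$ from nodes to ornaments such that the unique maximal element of $\sigma(v)$ is $v$ and any two sets $\sigma(v),\sigma(v')$ are nested or disjoint. $\mathcal{O}(\mathsf{T})$ is the set of ornamentations ordered by pointwise inclusion (a lattice with meet given by pointwise intersection); $\mathsf{Pop}(\sigma)=\bigwedge(\{\sigma\}\cup\{\sigma':\sigma'\lessdot\sigma\})$ and $\mathsf{Pop}^k$ is its $k$-th iterate. A section of $\sigma(v)$ is a set $\Delta_{\sigma(v)}(v')$ for a child $v'$ of $v$ with $v'\in\sigma(v)$ (the $v'$-section). An ornament $\sigma(x)$ is a bead of the $v'$-section of $\sigma(v)$ in $\sigma$ if $x\leq_\mathsf{T} v'$, $x\notin\sigma(v)$, and for every node $y$ on the path from $v'$ to $x$ (endpoints included), either $y\in\sigma(v)$ or $\sigma(y)=\{y\}$. *)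

From mathcomp Require Import all_boot.
Set Implicit Arguments. Unset Strict Implicit. Unset Printing Implicit Defensive.

(* A rooted tree on a finite node type T is given by a parent function
   [p : T -> T] with [p r = r] for the root r and such that every node
   reaches r by iterating p (see the hypotheses of the theorem).  *)

Section Orn.
Variables (T : finType) (p : T -> T).

Definition tle (x y : T) : bool := fconnect p x y.
Definition tlt (x y : T) : bool := (x != y) && tle x y.

Definition is_child (c v : T) : bool := (p c == v) && (c != v).

Definition tedge (S : {set T}) : rel T :=
  fun x y => [&& x \in S, y \in S & is_child x y || is_child y x].

Definition ornament (S : {set T}) : bool :=
  (S != set0) && [forall x in S, forall y in S, connect (tedge S) x y].

Definition is_max_in (S : {set T}) (x : T) : bool :=
  (x \in S) && [forall y in S, ~~ tlt x y].

Definition is_ornamentation (s : {ffun T -> {set T}}) : bool :=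
  [forall v, ornament (s v) && [forall x, is_max_in (s v) x == (x == v)]] &&
  [forall v, forall w,
     [|| s v \subset s w, s w \subset s v | [disjoint s v & s w]]].

Definition orn_le (s t : {ffun T -> {set T}}) : bool :=
  [forall v, s v \subset t v].
Definition orn_lt (s t : {ffun T -> {set T}}) : bool :=
  (s != t) && orn_le s t.

Definition orn_covered (s' s : {ffun T -> {set T}}) : bool :=
  [&& is_ornamentation s', is_ornamentation s, orn_lt s' s &
      [forall t, ~~ [&& is_ornamentation t, orn_lt s' t & orn_lt t s]]].

(* Pop(s) = meet of s and all elements covered by s; the meet in O(T)
   is pointwise intersection. *)
Definition Pop (s : {ffun T -> {set T}}) : {ffun T -> {set T}} :=
  [ffun v => s v :&: \bigcap_(s' | orn_covered s' s) s' v].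

(* the c-section of s(v), for a child c of v with c \in s v *)
Definition section (s : {ffun T -> {set T}}) (v c : T) : {set T} :=
  [set x in s v | tle x c].

(* s(x) is a bead of the c-section of s(v) *)
Definition is_bead (s : {ffun T -> {set T}}) (v c x : T) : bool :=
  [&& tle x c, x \notin s v &
      [forall y, (tle x y && tle y c) ==> ((y \in s v) || (s y == [set y]))]].

Definition beads (s : {ffun T -> {set T}}) (v c : T) : {set {set T}} :=
  (fun x => s x) @: [set x | is_bead s v c x].

End Orn.

(* In a rooted tree, an ornament with maximum w is a set that contains w, lies below w
   and is closed under the parent map away from w.  Call u removable in s w when s u is a
   maximal proper sub-ornament of s w containing every node of s w below u.  Deleting
   s u from s w yields an element covered by s, and every cover arises this way, so
   Pop s v is s v with all its removable blocks deleted.  After one application of Pop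
   every removable block is a singleton: otherwise it would contain a removable block of
   the previous ornamentation, which Pop deleted from it but not from the ornament above.
   Hence each further application of Pop turns the deepest removable block of the
   c-section into a new singleton bead, while the existing beads remain beads. *)

From mathcomp Require Import all_boot.
Set Implicit Arguments. Unset Strict Implicit. Unset Printing Implicit Defensive.

Definition nested (T : finType) (A B : {set T}) : bool :=
  [|| A \subset B, B \subset A | [disjoint A & B]].

Lemma nestedC (T : finType) (A B : {set T}) : nested A B = nested B A.
Proof. by rewrite /nested orbCA disjoint_sym. Qed.

Lemma disjoint_setDl (T : finType) (A B : {set T}) : [disjoint A :\: B & B].
Proof. by rewrite disjoint_subset; apply/subsetP => x /setDP[]. Qed.

Lemma nested_setD (T : finType) (A B C : {set T}) :
  nested A C -> nested B C -> (B \subset C -> C \subset A -> (C == B) || (C == A)) ->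
  nested (A :\: B) C.
Proof.
case/or3P=> [sAC|sCA|dAC] nBC maxB.
- by rewrite /nested (subset_trans (subsetDl A B) sAC).
- case/or3P: nBC => [sBC|sCB|dBC].
  + case/orP: (maxB sBC sCA) => /eqP eqC; rewrite /nested eqC.
      by rewrite disjoint_setDl !orbT.
    by rewrite subsetDl.
  + by rewrite /nested (disjointWr sCB (disjoint_setDl A B)) !orbT.
  + by rewrite /nested subsetD sCA disjoint_sym dBC orbT.
- by rewrite /nested (disjointWl (subsetDl A B) dAC) !orbT.
Qed.

Lemma orn_le_anti (T : finType) (s t : {ffun T -> {set T}}) :
  orn_le s t -> orn_le t s -> s = t.
Proof.
move=> /forallP le_st /forallP le_ts; apply/ffunP => v.
by apply/eqP; rewrite eqEsubset le_st le_ts.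
Qed.

Section Ornamentations.

Variables (T : finType) (p : T -> T) (r : T).
Hypotheses (p_root : p r = r) (reach_root : forall v, fconnect p v r).

Lemma tleP x y : reflect (exists n, iter n p x = y) (tle p x y).
Proof.
apply: (iffP idP) => [xy | [n <-]]; last exact: fconnect_iter.
by exists (findex p x y); apply: iter_findex.
Qed.

Lemma tle_refl x : tle p x x.
Proof. exact: connect0. Qed.

Lemma tle_trans y x z : tle p x y -> tle p y z -> tle p x z.
Proof. exact: connect_trans. Qed.

Lemma tle_parent x : tle p x (p x).
Proof. exact: fconnect1. Qed.

Lemma tle_anti x y : tle p x y -> tle p y x -> x = y.
Proof.
case/tleP=> n xy /tleP[m yx].
have cycle_x j : iter (j * (m + n)) p x = x.
  by elim: j => //= j IHj; rewrite mulSn iterD IHj iterD xy.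
case: (posnP (m + n)) => [/eqP | mn_gt0].
  by rewrite addn_eq0 => /andP[_ /eqP n0]; rewrite -xy n0.
case/tleP: (reach_root x) => a xr.
have x_root : x = r.
  by rewrite -(cycle_x a) -(subnK (leq_pmulr a mn_gt0)) iterD xr iter_fix.
by rewrite -xy x_root iter_fix.
Qed.

Lemma tle_total x y z : tle p x y -> tle p x z -> tle p y z || tle p z y.
Proof.
move=> /tleP[n <-] /tleP[m <-]; case: (leqP n m) => [le_nm | /ltnW le_mn].
  by apply/orP; left; apply/tleP; exists (m - n); rewrite -iterD subnK.
by apply/orP; right; apply/tleP; exists (n - m); rewrite -iterD subnK.
Qed.

Lemma parent_tle x y : tle p x y -> x != y -> tle p (p x) y.
Proof.
case/tleP=> [[|n] <-]; rewrite ?eqxx //= => _.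
by apply/tleP; exists n; rewrite -iterSr.
Qed.

Lemma parent_neq x y : tle p x y -> x != y -> p x != x.
Proof.
move=> xy; apply: contraNN => /eqP px; apply/eqP.
by case/tleP: xy => n <-; rewrite iter_fix.
Qed.

Definition ancestors x := [set y | tle p x y].

Lemma card_ancestors_lt x y : tle p x y -> x != y -> #|ancestors y| < #|ancestors x|.
Proof.
move=> xy neq_xy; apply: proper_card; apply/properP; split.
  by apply/subsetP => z; rewrite !inE; apply: tle_trans.
exists x; rewrite !inE ?tle_refl //.
by apply: contra neq_xy => yx; rewrite (tle_anti xy yx).
Qed.

Definition rooted (S : {set T}) (w : T) : Prop :=
  [/\ w \in S, {in S, forall x, tle p x w} & {in S, forall x, x != w -> p x \in S}].

Lemma tedge_sym S : symmetric (tedge p S).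
Proof. by move=> x y; rewrite /tedge andbCA orbC. Qed.

(* The first edge of the path leaving the down-set of x must be {x, p x}. *)
Lemma path_leave_down S x a s :
  path (tedge p S) a s -> tle p a x -> ~~ tle p (last a s) x -> p x \in S.
Proof.
elim: s a => [|y s IHs] a /=; first by move=> _ ->.
case/andP=> /and3P[_ yS edge_ay] path_ys ax.
case yx: (tle p y x); first exact: IHs.
move=> _; case/orP: edge_ay => /andP[/eqP ay _].
  case: (eqVneq a x) => [<- | neq_ax]; first by rewrite ay.
  by move: yx; rewrite -ay parent_tle.
by move: yx; rewrite (tle_trans (tle_parent y)) // ay.
Qed.

Lemma rooted_ornament S w :
  ornament p S -> (forall x, is_max_in p S x = (x == w)) -> rooted S w.
Proof.
case/andP=> _ /forall_inP S_conn S_max.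
have wS : w \in S by have := S_max w; rewrite eqxx => /andP[].
have below_w : {in S, forall x, tle p x w}.
  move=> x xS; pose above_x z := (z \in S) && tle p x z.
  have [|z /andP[zS xz] z_top] := arg_minnP (fun z => #|ancestors z|) (_ : above_x x).
    by rewrite /above_x xS tle_refl.
  suff /eqP <- : z == w by [].
  rewrite -S_max /is_max_in zS; apply/forall_inP => y yS; apply/negP => /andP[neq_zy zy].
  have := z_top y; rewrite /above_x yS (tle_trans xz zy) => /(_ isT).
  by rewrite leqNgt card_ancestors_lt.
split=> // x xS neq_xw.
have /connectP[s path_s last_s] := forall_inP (S_conn x xS) w wS.
apply: (path_leave_down path_s (tle_refl x)); rewrite -last_s.
by apply: contra neq_xw => wx; rewrite (tle_anti (below_w x xS) wx).
Qed.

Lemma ornament_rooted S w :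
  rooted S w -> ornament p S /\ (forall x, is_max_in p S x = (x == w)).
Proof.
case=> wS below_w up_closed.
have to_w x : x \in S -> connect (tedge p S) x w.
  move=> xS; case/tleP: (below_w x xS) => n; elim: n x xS => [|n IHn] x xS.
    by move=> <-; apply: connect0.
  case: (eqVneq x w) => [-> _ | neq_xw]; first exact: connect0.
  rewrite iterSr => /(IHn _ (up_closed x xS neq_xw)); apply: connect_trans.
  apply: connect1; rewrite /tedge xS up_closed //= /is_child eqxx /=.
  by rewrite eq_sym (parent_neq (below_w x xS) neq_xw).
split.
  apply/andP; split; first by apply/set0Pn; exists w.
  apply/forall_inP => x xS; apply/forall_inP => y yS.
  by rewrite (connect_trans (to_w x xS)) // (sym_connect_sym (tedge_sym S)) to_w.
move=> x; rewrite /is_max_in; case: (eqVneq x w) => [-> | neq_xw].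
  rewrite wS; apply/forall_inP => y yS; apply/negP => /andP[neq_wy wy].
  by move: neq_wy; rewrite (tle_anti wy (below_w y yS)) eqxx.
apply/negbTE; case xS: (x \in S) => //=.
by apply/negP => /forall_inP/(_ w wS); rewrite /tlt neq_xw below_w.
Qed.

Lemma rooted_up S w x z : rooted S w -> x \in S -> tle p x z -> tle p z w -> z \in S.
Proof.
case=> wS below_w up_closed xS /tleP[n <-]; elim: n x xS => // n IHn x xS.
case: (eqVneq x w) => [-> | neq_xw] nw.
  by rewrite (tle_anti nw (fconnect_iter p n.+1 w)).
by rewrite iterSr; apply: IHn (up_closed x xS neq_xw) _; rewrite -iterSr.
Qed.

Lemma ornamentationP (s : {ffun T -> {set T}}) :
  reflect ((forall v, rooted (s v) v) /\ (forall v w, nested (s v) (s w)))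
          (is_ornamentation p s).
Proof.
apply: (iffP andP) => [[/forallP orn_s /forallP nest_s] | [root_s nest_s]]; split.
- move=> v; case/andP: (orn_s v) => orn_v /forallP max_v.
  by apply: rooted_ornament => // x; apply/eqP.
- by move=> v w; apply: (forallP (nest_s v)).
- apply/forallP => v; case: (ornament_rooted (root_s v)) => -> max_v /=.
  by apply/forallP => x; rewrite max_v.
- by apply/forallP => v; apply/forallP => w; apply: nest_s.
Qed.

Section Ornamentation.

Variable s : {ffun T -> {set T}}.
Hypothesis s_orn : is_ornamentation p s.

Lemma orn_rooted v : rooted (s v) v.
Proof. by case/ornamentationP: s_orn. Qed.

Lemma orn_nested v w : nested (s v) (s w).
Proof. by case/ornamentationP: s_orn. Qed.

Lemma orn_self v : v \in s v.
Proof. by case: (orn_rooted v). Qed.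

Lemma orn_below v x : x \in s v -> tle p x v.
Proof. by case: (orn_rooted v) => _ below_v _; apply: below_v. Qed.

Lemma orn_up w x z : x \in s w -> tle p x z -> tle p z w -> z \in s w.
Proof. exact: rooted_up (orn_rooted w). Qed.

Lemma orn_sub v w x : x \in s v -> x \in s w -> tle p v w -> s v \subset s w.
Proof.
move=> xv xw vw; case/or3P: (orn_nested v w) => // [swv | dvw].
  by rewrite (tle_anti vw (orn_below (subsetP swv w (orn_self w)))).
by rewrite (disjointFr dvw xv) in xw.
Qed.

Lemma orn_inj : injective s.
Proof.
move=> x y sxy; apply: tle_anti; apply: orn_below.
  by rewrite -sxy orn_self.
by rewrite sxy orn_self.
Qed.

End Ornamentation.

Section Blocks.

Variable s : {ffun T -> {set T}}.
Hypothesis s_orn : is_ornamentation p s.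

Definition maxsub w u : bool :=
  [&& u != w, s u \subset s w &
      [forall z, (s u \subset s z) && (s z \subset s w) ==> (z == u) || (z == w)]].

Definition removable w u : bool :=
  maxsub w u && ([set y in s w | tle p y u] \subset s u).

Definition remove_block w u : {ffun T -> {set T}} :=
  [ffun z => if z == w then s w :\: s u else s z].

Lemma maxsub_sub w u : maxsub w u -> s u \subset s w.
Proof. by case/and3P. Qed.

Lemma maxsub_mem w u : maxsub w u -> u \in s w.
Proof. by move/maxsub_sub/subsetP; apply; apply: (orn_self s_orn). Qed.

Lemma maxsub_notin w u : maxsub w u -> w \notin s u.
Proof.
move=> mwu; case/and3P: (mwu) => neq_uw _ _; apply: contra neq_uw => wu.
by rewrite (tle_anti (orn_below s_orn (maxsub_mem mwu)) (orn_below s_orn wu)).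
Qed.

Lemma maxsub_card w u : maxsub w u -> #|s u| < #|s w|.
Proof.
move=> mwu; apply: proper_card; apply/properP; split; first by case/and3P: mwu.
by exists w; rewrite ?(orn_self s_orn) ?maxsub_notin.
Qed.

Lemma maxsub_maximal w u z :
  maxsub w u -> s u \subset s z -> s z \subset s w -> z = u \/ z = w.
Proof.
case/and3P=> _ _ /forallP/(_ z) max_u suz szw; rewrite suz szw /= in max_u.
by case/orP: max_u => /eqP->; [left | right].
Qed.

Lemma exists_maxsub w y : y \in s w -> y != w -> exists2 u, maxsub w u & y \in s u.
Proof.
move=> yw neq_yw; pose P z := [&& y \in s z, z != w & s z \subset s w].
have Py : P y by rewrite /P (orn_self s_orn) neq_yw
  (orn_sub s_orn (orn_self s_orn y) yw (orn_below s_orn yw)).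
have [u /and3P[yu neq_uw suw] u_max] := arg_maxnP (fun z => #|s z|) Py.
exists u => //; rewrite /maxsub neq_uw suw; apply/forallP => z; apply/implyP.
case/andP=> suz szw; case: (eqVneq z w) => [_ | neq_zw]; first by rewrite orbT.
have Pz : P z by rewrite /P (subsetP suz) // neq_zw.
have /eqP szu : s u == s z by rewrite eqEcard suz; apply: u_max.
by rewrite (orn_inj s_orn szu) eqxx.
Qed.

Lemma child_maxsub v c : is_child p c v -> c \in s v -> maxsub v c.
Proof.
case/andP=> /eqP pc neq_cv cv; have le_cv : tle p c v by rewrite -pc tle_parent.
rewrite /maxsub neq_cv (orn_sub s_orn (orn_self s_orn c) cv le_cv); apply/forallP => z.
apply/implyP => /andP[scz szv].
have le_cz := orn_below s_orn (subsetP scz c (orn_self s_orn c)).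
have le_zv := orn_below s_orn (subsetP szv z (orn_self s_orn z)).
case: (eqVneq c z) => [// | neq_cz].
by rewrite (tle_anti le_zv); rewrite -?pc ?parent_tle ?eqxx ?orbT.
Qed.

(* A deepest maximal sub-ornament below [u0] contains everything of [s w] below it. *)
Lemma exists_removable_below w u0 : maxsub w u0 -> exists2 u, removable w u & tle p u u0.
Proof.
move=> mwu0; pose P z := maxsub w z && tle p z u0.
have [|u /andP[mwu uu0] u_deepest] := arg_maxnP (fun z => #|ancestors z|) (_ : P u0).
  by rewrite /P mwu0 tle_refl.
exists u => //; rewrite /removable mwu; apply/subsetP => y; rewrite inE => /andP[yw yu].
apply: contraT => yNu.
have neq_yw : y != w.
  apply: contraNneq yNu => eq_yw; rewrite eq_yw in yu *.
  exact: (orn_up s_orn (orn_self s_orn u) (orn_below s_orn (maxsub_mem mwu)) yu).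
have [u2 mwu2 yu2] := exists_maxsub yw neq_yw.
have neq_u2u : u2 != u by apply: contraNneq yNu => <-.
case/orP: (tle_total yu (orn_below s_orn yu2)) => [u_u2 | u2_u].
  have su_u2 : s u \subset s u2.
    exact: (orn_sub s_orn (orn_self s_orn u) (orn_up s_orn yu2 yu u_u2) u_u2).
  case: (maxsub_maximal mwu su_u2 (maxsub_sub mwu2)) => eq_u2.
    by rewrite eq_u2 eqxx in neq_u2u.
  by case/and3P: mwu2; rewrite eq_u2 eqxx.
have := u_deepest u2; rewrite /P mwu2 (tle_trans u2_u uu0) => /(_ isT).
by rewrite /= leqNgt card_ancestors_lt.
Qed.

Lemma remove_block_orn w u : removable w u -> is_ornamentation p (remove_block w u).
Proof.
case/andP=> mwu low_u; apply/ornamentationP; split => [v | v z].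
  rewrite ffunE; case: eqP => [-> | _]; last exact: (orn_rooted s_orn).
  case: (orn_rooted s_orn w) => wS below_w up_w; split.
  - by rewrite inE maxsub_notin.
  - by move=> x /setDP[xw _]; apply: below_w.
  - move=> x /setDP[xw xNu] neq_xw; rewrite inE up_w // andbT.
    apply: contra xNu => pxu; apply: (subsetP low_u); rewrite inE xw.
    exact: tle_trans (tle_parent x) (orn_below s_orn pxu).
have nest_w z' : z' != w -> nested (s w :\: s u) (s z').
  move=> neq_zw; apply: nested_setD; rewrite ?(orn_nested s_orn) // => suz szw.
  by case: (maxsub_maximal mwu suz szw) => ->; rewrite eqxx ?orbT.
rewrite !ffunE; case: (eqVneq v w) => [_ | neq_vw]; case: (eqVneq z w) => [_ | neq_zw].
- by rewrite /nested subxx.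
- exact: nest_w.
- by rewrite nestedC nest_w.
- exact: (orn_nested s_orn).
Qed.

Lemma remove_block_le w u : orn_le (remove_block w u) s.
Proof.
by apply/forallP => z; rewrite ffunE; case: eqP => [-> | _]; rewrite ?subsetDl.
Qed.

Lemma le_remove_block t w u : is_ornamentation p t -> orn_le t s ->
  maxsub w u -> u \notin t w -> orn_le t (remove_block w u).
Proof.
move=> t_orn /forallP t_le mwu uNt; apply/forallP => z; rewrite ffunE.
case: eqP => [-> | _]; last exact: t_le.
rewrite subsetD t_le disjoint_subset; apply/subsetP => x xt; rewrite inE.
apply: contra uNt => xu.
exact: (orn_up t_orn xt (orn_below s_orn xu) (orn_below s_orn (maxsub_mem mwu))).
Qed.

Lemma remove_block_covered w u : removable w u -> orn_covered p (remove_block w u) s.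
Proof.
move=> rwu; have [mwu _] := andP rwu; have uw := maxsub_mem mwu.
rewrite /orn_covered remove_block_orn // s_orn /orn_lt remove_block_le andbT /=.
apply/andP; split.
  apply/eqP => /ffunP/(_ w); rewrite ffunE eqxx => eq_w.
  by move: uw; rewrite -eq_w inE (orn_self s_orn).
apply/forallP => t; apply/negP => /and3P[t_orn /andP[neq_Rt le_Rt] /andP[neq_ts le_ts]].
have t_off_w z : z != w -> t z = s z.
  move=> neq_zw; apply/eqP; rewrite eqEsubset (forallP le_ts z).
  by move/forallP/(_ z): le_Rt; rewrite ffunE (negbTE neq_zw).
case: (boolP (u \in t w)) => [ut | uNt].
  move/negP: neq_ts; apply; apply/eqP/orn_le_anti => //; apply/forallP => z.
  case: (eqVneq z w) => [-> | /t_off_w-> //]; apply/subsetP => x xw.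
  case: (boolP (x \in s u)) => [xu | xNu].
    have neq_uw : u != w by case/and3P: mwu.
    have tuw := orn_sub t_orn (orn_self t_orn u) ut (orn_below s_orn uw).
    by move: tuw; rewrite t_off_w // => /subsetP; apply.
  by move/forallP/(_ w)/subsetP: le_Rt; apply; rewrite ffunE eqxx inE xNu.
move/negP: neq_Rt; apply; apply/eqP/orn_le_anti => //.
exact: le_remove_block.
Qed.

(* Choose [w] with [#|s w|] minimal among the nodes where [t] differs from [s]:
   then [t] agrees with [s] on every maximal sub-ornament of [s w]. *)
Lemma covered_remove_block t :
  orn_covered p t s -> exists w u, removable w u /\ t = remove_block w u.
Proof.
case/and4P=> t_orn _ /andP[neq_ts le_ts] /forallP t_cov.
have /existsP[w0 tw0] : [exists w, t w != s w].
  rewrite -negb_forall; apply: contra neq_ts => /forallP eq_ts.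
  by apply/eqP/ffunP => w; apply/eqP.
have [w neq_tsw w_min] := @arg_minnP _ w0 (fun z => t z != s z) (fun z => #|s z|) tw0.
have sub_tw u : maxsub w u -> u \in t w -> s u \subset t w.
  move=> mwu ut; have: t u = s u.
    apply/eqP; apply: contraT => /w_min; rewrite leqNgt.
    by move/negP; rewrite maxsub_card.
  move=> <-; have uw := orn_below s_orn (maxsub_mem mwu).
  exact: (orn_sub t_orn (orn_self t_orn u) ut uw).
have /subsetPn[y ysw yNt] : ~~ (s w \subset t w).
  by apply: contra neq_tsw => stw; rewrite eqEsubset stw (forallP le_ts w).
have neq_yw : y != w by apply: contraNneq yNt => ->; apply: (orn_self t_orn).
have [u0 mwu0 yu0] := exists_maxsub ysw neq_yw.
have u0Nt : u0 \notin t w by apply: contra yNt => /(sub_tw _ mwu0)/subsetP; apply.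
have [u rwu uu0] := exists_removable_below mwu0.
have uNt : u \notin t w.
  apply: contra u0Nt => ut.
  exact: (orn_up t_orn ut uu0 (orn_below s_orn (maxsub_mem mwu0))).
exists w, u; split => //; apply/eqP; apply: contraT => neq_tR.
have /and4P[R_orn _ lt_Rs _] := remove_block_covered rwu.
move: (t_cov (remove_block w u)); rewrite R_orn lt_Rs /orn_lt neq_tR /= andbT.
by rewrite le_remove_block // (andP rwu).1.
Qed.

Lemma Pop_removable v : Pop p s v = s v :\: \bigcup_(u | removable v u) s u.
Proof.
apply/setP => y; rewrite ffunE in_setI in_setD.
case: (boolP (y \in s v)) => ysv; rewrite ?andbT ?andbF //=.
apply/bigcapP/negP => [y_cov /bigcupP[u rvu yu] | yNrem t].
  by move: (y_cov _ (remove_block_covered rvu)); rewrite ffunE eqxx inE yu.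
case/covered_remove_block=> w [u [rwu ->]]; rewrite ffunE.
case: eqP => [eq_wv | _] //; subst w; rewrite inE ysv andbT.
by apply/negP => yu; apply: yNrem; apply/bigcupP; exists u.
Qed.

Lemma notin_Pop_removable w u x : removable w u -> x \in s u -> x \notin Pop p s w.
Proof.
move=> rwu xu; rewrite Pop_removable inE negb_and negbK.
by apply/orP; left; apply/bigcupP; exists u.
Qed.

End Blocks.

Lemma orn_meet_family (P : pred {ffun T -> {set T}}) s :
  is_ornamentation p s -> (forall t, P t -> is_ornamentation p t) ->
  is_ornamentation p [ffun v => s v :&: \bigcap_(t | P t) t v].
Proof.
move=> s_orn P_orn; set m := [ffun _ => _].
have memP v x : reflect (x \in s v /\ forall t, P t -> x \in t v) (x \in m v).
  rewrite ffunE inE; apply: (iffP andP) => -[xs xP]; split=> //.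
    by move/bigcapP: xP.
  by apply/bigcapP.
apply/ornamentationP; split => [v | v w].
  split.
  - by apply/memP; split=> [|t /P_orn t_orn]; apply: orn_self.
  - by move=> x /memP[xs _]; apply: (orn_below s_orn).
  - move=> x /memP[xs xP] neq_xv; apply/memP; split.
      by case: (orn_rooted s_orn v) => _ _; apply.
    by move=> t Pt; case: (orn_rooted (P_orn t Pt) v) => _ _; apply; first apply: xP.
case: (boolP [disjoint m v & m w]) => [dvw | ]; first by rewrite /nested dvw !orbT.
rewrite -setI_eq0 => /set0Pn[y /setIP[yv yw]].
have sub_m a b : y \in m a -> y \in m b -> tle p a b -> m a \subset m b.
  move=> /memP[ya yPa] /memP[yb yPb] ab; apply/subsetP => x /memP[xa xPa].
  apply/memP; split; first exact: subsetP (orn_sub s_orn ya yb ab) x xa.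
  move=> t Pt; have t_orn := P_orn t Pt.
  exact: subsetP (orn_sub t_orn (yPa t Pt) (yPb t Pt) ab) x (xPa t Pt).
have [[ysv _] [ysw _]] := (memP v y yv, memP w y yw).
case/orP: (tle_total (orn_below s_orn ysv) (orn_below s_orn ysw)) => [vw | wv].
  by rewrite /nested sub_m.
by rewrite /nested (sub_m w v) ?orbT.
Qed.

Lemma Pop_orn s : is_ornamentation p s -> is_ornamentation p (Pop p s).
Proof. by move=> s_orn; apply: orn_meet_family => // t /and4P[]. Qed.

Lemma Pop_sub s v : Pop p s v \subset s v.
Proof. by rewrite ffunE subsetIl. Qed.

Lemma Pop_singleton s y : is_ornamentation p s -> s y = [set y] -> Pop p s y = [set y].
Proof.
move=> s_orn sy; apply/eqP; rewrite eqEsubset -{1}sy Pop_sub sub1set.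
exact: (orn_self (Pop_orn s_orn)).
Qed.

Definition bead_nodes s v c := [set x | is_bead p s v c x].

Section PopTwice.

Variable tau : {ffun T -> {set T}}.
Hypothesis tau_orn : is_ornamentation p tau.

Lemma removable_Pop_singleton v u : removable (Pop p tau) v u -> Pop p tau u = [set u].
Proof.
move=> ruv; have sg_orn := Pop_orn tau_orn; have [muv low_u] := andP ruv.
apply/eqP; rewrite eqEsubset sub1set (orn_self sg_orn) andbT; apply/subsetP => x xu.
rewrite inE; apply: contraT => neq_xu.
have [u0 mu0 _] := exists_maxsub tau_orn (subsetP (Pop_sub tau u) x xu) neq_xu.
have [u' ru' _] := exists_removable_below tau_orn mu0.
have u'tu := maxsub_mem tau_orn (andP ru').1.
have utv := subsetP (Pop_sub tau v) u (maxsub_mem sg_orn muv).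
have stuv := orn_sub tau_orn (orn_self tau_orn u) utv (orn_below tau_orn utv).
have u'sgv : u' \in Pop p tau v.
  rewrite Pop_removable // inE (subsetP stuv u' u'tu) andbT; apply/bigcupP => -[b rb u'b].
  have uNb : u \notin tau b.
    by apply: contraL (maxsub_mem sg_orn muv) => ub; apply: notin_Pop_removable rb ub.
  case/or3P: (orn_nested tau_orn b u) => [sbu | sub | dbu].
  - case: (maxsub_maximal (andP rb).1 sbu stuv) => eq_u.
      by move: uNb; rewrite eq_u (orn_self tau_orn).
    by case/and3P: muv; rewrite eq_u eqxx.
  - by move: uNb; rewrite (subsetP sub u (orn_self tau_orn u)).
  - by rewrite (disjointFr dbu u'b) in u'tu.
have: u' \in Pop p tau u.
  by apply: (subsetP low_u); rewrite inE u'sgv (orn_below tau_orn u'tu).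
by rewrite (negbTE (notin_Pop_removable tau_orn ru' (orn_self tau_orn u'))).
Qed.

Lemma Pop_mem_or_singleton v y : y \in Pop p tau v ->
  (y \in Pop p (Pop p tau) v) || (Pop p (Pop p tau) y == [set y]).
Proof.
have sg_orn := Pop_orn tau_orn.
move=> ysg; case: (boolP (y \in Pop p (Pop p tau) v)) => //= yNP.
move: yNP; rewrite Pop_removable // inE ysg andbT negbK => /bigcupP[u ru yu].
move: yu; rewrite (removable_Pop_singleton ru) inE => /eqP->.
by rewrite (Pop_singleton sg_orn (removable_Pop_singleton ru)).
Qed.

Lemma bead_nodes_Pop_subset v c :
  bead_nodes (Pop p tau) v c \subset bead_nodes (Pop p (Pop p tau)) v c.
Proof.
apply/subsetP => x; rewrite !inE /is_bead => /and3P[xc xNsg /forallP x_bead].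
rewrite xc (contra (subsetP (Pop_sub _ v) x) xNsg) /=; apply/forallP => y.
apply/implyP => /(implyP (x_bead y)) /orP[ysg | /eqP sgy].
  exact: Pop_mem_or_singleton.
by rewrite (Pop_singleton (Pop_orn tau_orn) sgy) eqxx orbT.
Qed.

(* Witness: the deepest removable block of [Pop tau v] below [c], a singleton by
   [removable_Pop_singleton]. *)
Lemma Pop_new_bead v c : is_child p c v -> c \in Pop p tau v ->
  exists2 l, l \in bead_nodes (Pop p (Pop p tau)) v c & l \notin bead_nodes (Pop p tau) v c.
Proof.
move=> cv csg; have sg_orn := Pop_orn tau_orn.
have [l rl lc] := exists_removable_below sg_orn (child_maxsub sg_orn cv csg).
have [ml _] := andP rl; have lsg := maxsub_mem sg_orn ml.
have sgl := removable_Pop_singleton rl.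
exists l; last by rewrite inE /is_bead lsg andbF.
rewrite inE /is_bead lc (notin_Pop_removable sg_orn rl (orn_self sg_orn l)) /=.
apply/forallP => y; apply/implyP => /andP[ly yc].
case: (eqVneq y l) => [-> | neq_yl]; first by rewrite (Pop_singleton sg_orn sgl) eqxx orbT.
have le_cv : tle p c v by case/andP: cv => /eqP <- _; apply: tle_parent.
have ysg := orn_up sg_orn lsg ly (tle_trans yc le_cv).
rewrite Pop_removable // inE ysg andbT; apply/orP; left; apply/bigcupP => -[u ru yu].
have [mu low_u] := andP ru.
have lu : l \in Pop p tau u.
  by apply: (subsetP low_u); rewrite inE lsg (tle_trans ly (orn_below sg_orn yu)).
have slu : Pop p tau l \subset Pop p tau u by rewrite sgl sub1set.
case: (maxsub_maximal ml slu (maxsub_sub mu)) => eq_u.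
  by move: yu; rewrite eq_u sgl inE (negbTE neq_yl).
by case/and3P: mu; rewrite eq_u eqxx.
Qed.

Lemma card_bead_nodes_Pop v c : is_child p c v -> c \in Pop p tau v ->
  #|bead_nodes (Pop p tau) v c| < #|bead_nodes (Pop p (Pop p tau)) v c|.
Proof.
move=> cv csg; have [l lP lN] := Pop_new_bead cv csg.
by apply: proper_card; apply/properP; split; [apply: bead_nodes_Pop_subset | exists l].
Qed.

End PopTwice.

Lemma iter_Pop_orn d k : is_ornamentation p d -> is_ornamentation p (iter k (Pop p) d).
Proof. by move=> d_orn; elim: k => //= k; apply: Pop_orn. Qed.

Lemma card_beads s v c : is_ornamentation p s -> #|beads p s v c| = #|bead_nodes s v c|.
Proof. by move=> s_orn; rewrite card_imset //; apply: orn_inj. Qed.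

Lemma card_bead_nodes_iter_Pop d v c k : is_ornamentation p d -> is_child p c v ->
  c \in iter k.+1 (Pop p) d v -> k <= #|bead_nodes (iter k.+1 (Pop p) d) v c|.
Proof.
move=> d_orn cv; elim: k => // k IHk c_in.
have c_in' := subsetP (Pop_sub _ v) c c_in.
exact: leq_ltn_trans (IHk c_in') (card_bead_nodes_Pop (iter_Pop_orn k d_orn) cv c_in').
Qed.

End Ornamentations.

Theorem proposition5p3 (T : finType) (p : T -> T) (r : T)
  (Hroot : p r = r) (Htree : forall v : T, fconnect p v r)
  (k : nat) (delta : {ffun T -> {set T}}) :
  is_ornamentation p delta ->
  forall v c : T, is_child p c v -> c \in iter k (Pop p) delta v ->
  k - 1 <= #|beads p (iter k (Pop p) delta) v c|.
Proof.
move=> delta_orn v c cv; case: k => [|k] // c_in.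
have iter_orn := iter_Pop_orn Hroot Htree k.+1 delta_orn.
rewrite (card_beads Hroot Htree v c iter_orn) subn1.
exact: (card_bead_nodes_iter_Pop Hroot Htree).
Qed.
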